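(* Let $G=(V,E)$ have $|V|=2$, let $N>3$, $\varepsilon\in(0,\frac1{N-1}]$ and $s_0\in S_{nc}$. Then for every $\gamma\in(0,1)$, every trigger strategies profile $\bar\sigma$ of $\Gamma_N(G|s_0,\gamma,\varepsilon)$ is nonpositional.
   Context: Setting. $G=(V,E)$ is a finite, simple, connected, undirected graph; $N\ge 3$ is an integer; $\gamma\in(0,1)$ and $\varepsilon\in[0,\frac1{N-1}]$ are parameters. There are $N$ tokens: cops $C_1,\dots,C_{N-1}$ (tokens $1,\dots,N-1$) and the robber $R$ (token $N$). A state is $s=(x^1,\dots,x^N,n)$ where $x^i\in V$ is the position of token $i$ and $n\in\{1,\dots,N\}$ is the token that moves next; $S^n$ denotes the set of states with token $n$ to move. A state is a capture state if $x^i=x^N$ for some $i\le N-1$; $S_{nc}$ is the set of noncapture states. In each turn exactly one token, the one to move, moves to a vertex of its closed neighbourhood (it may stay put); the order of moves is $C_1,C_2,\dots,C_{N-1},R,C_1,\dots$. Starting from an initial state $s_0\in S_{nc}$ at time $0$, the capture time is the first time $t$ at which a capture state occurs (infinite if never); after capture the game is over. Auxiliary games. For $m\in\{1,\dots,N\}$, $\Gamma_N^m(G|s_0,\gamma,\varepsilon)$ is the two-player zero-sum game in which player $P_m$ controls token $m$ and player $P_{-m}$ controls all other tokens, with the following payoff to $P_m$ ($P_{-m}$ receives its negative): $0$ if no capture ever occurs; if capture occurs at time $t$: for $m=N$, $-\gamma^t$; for $m\le N-1$, $\frac{1-\varepsilon}{K}\gamma^t$ if exactly $K\in\{1,\dots,N-2\}$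 cops, including $C_m$, are on the robber's vertex, $\frac{\varepsilon}{N-K-1}\gamma^t$ if exactly $K\in\{1,\dots,N-2\}$ cops, not including $C_m$, are on the robber's vertex, and $\frac{\gamma^t}{N-1}$ if all $N-1$ cops are on the robber's vertex. $\Gamma^N_N$ is the modified cops-and-robber (CR) game. A pure positional strategy for token $n$ maps each state in $S^n\cap S_{nc}$ to an allowed next vertex. Each $\Gamma^m_N$ has optimal pure positional strategies (optimal from every initial state). For $m,n\in\{1,\dots,N\}$, $\phi^n_m$ denotes the strategy of token $n$ in a chosen pair of optimal pure positional strategies of $\Gamma^m_N$ (so $\phi^m_m$ is $P_m$'s optimal strategy and $(\phi^n_m)_{n\ne m}$ is $P_{-m}$'s). $\widehat\Sigma^n$ is the set of pure positional strategies of token $n$ that are components of optimal strategy pairs of $\Gamma^N_N$ (CR-optimal strategies). Trigger strategies. Given a choice of $(\phi^n_m)_{n,m}$, the trigger strategies profile $\bar\sigma=(\bar\sigma^1,\dots,\bar\sigma^N)$ of the $N$-player SCAR game $\Gamma_N(G|s_0,\gamma,\varepsilon)$ (same board and moves; player $n$ controls token $n$) is: token $n$, at current state $s$, plays $\phi^n_n(s)$ as long as every other player $m$ has followed $\phi^m_m$, and plays $\phi^n_m(s)$ from the moment a player $m\neq n$ deviates from $\phi^m_m$. Different choices of the optimal strategies give different trigger strategies profiles. $\bar\sigma$ is called positional if for all $n,m\in\{1,\dots,N\}$ there is $\widehat\sigma^n\in\widehat\Sigma^n$ with $\phi^n_m(s)=\widehat\sigma^n(s)$ for every state $s\in S^n\cap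 S_{nc}$ reachable from $s_0$ by a finite sequence of legal moves passing only through noncapture states; otherwise $\bar\sigma$ is nonpositional. *)

From HB Require Import structures.
From mathcomp Require Import all_boot.
From Stdlib Require Import Reals ClassicalEpsilon.

Set Implicit Arguments.
Unset Strict Implicit.
Unset Printing Implicit Defensive.

(* Tokens are 'I_N, 0-indexed: token i (val i < N-1) is cop C_{i+1};
   token with value N-1 is the robber R.
   A state is (positions, token to move). *)
Notation state N T := ({ffun 'I_N -> T} * 'I_N)%type.

Definition is_robber (N : nat) (i : 'I_N) : bool := val i == N.-1.
Definition is_cop (N : nat) (i : 'I_N) : bool := val i != N.-1.

Definition on_robber (N : nat) (T : finType) (s : state N T) (i : 'I_N) : bool :=
  [exists j : 'I_N, is_robber j && (s.1 i == s.1 j)].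

Definition capture (N : nat) (T : finType) (s : state N T) : bool :=
  [exists i : 'I_N, is_cop i && on_robber s i].

Definition ncops_on (N : nat) (T : finType) (s : state N T) : nat :=
  #|[pred i : 'I_N | is_cop i && on_robber s i]|.

Definition legal (T : finType) (e : rel T) (x y : T) : bool := (y == x) || e x y.

Definition step (N : nat) (T : finType) (s : state N T) (v : T) : state N T :=
  ([ffun i => if i == s.2 then v else s.1 i], ordS s.2).

(* general (history dependent) pure strategy profile: token n, given the
   past states and the current state, chooses a vertex *)
Definition profile (N : nat) (T : finType) :=
  'I_N -> seq (state N T) -> state N T -> T.

Fixpoint run (N : nat) (T : finType) (f : profile N T) (past : seq (state N T))
    (cur : state N T) (t : nat) : state N T :=
  match t with
  | 0 => cur
  | t'.+1 => run f (rcons past cur) (step cur (f cur.2 past cur)) t'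
  end.

Definition play (N : nat) (T : finType) (f : profile N T) (s0 : state N T) (t : nat) :=
  run f [::] s0 t.

Definition reward (N : nat) (T : finType) (eps : R) (m : 'I_N) (s : state N T) : R :=
  if is_robber m then (-1)%R
  else let K := ncops_on s in
       if K == N.-1 then (/ INR (N.-1))%R
       else if on_robber s m then ((1 - eps) / INR K)%R
       else (eps / INR (N - K - 1))%R.

Definition payoff (N : nat) (T : finType) (gamma eps : R) (m : 'I_N)
    (f : profile N T) (s0 : state N T) : R :=
  match excluded_middle_informative (exists t, capture (play f s0 t)) with
  | left H => let t := @ex_minn (fun t => capture (play f s0 t)) H in
              (reward eps m (play f s0 t) * pow gamma t)%R
  | right _ => 0%R
  end.

Definition legal_profile (N : nat) (T : finType) (e : rel T) (f : profile N T) : Prop :=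
  forall past cur, ~~ capture cur -> legal e (cur.1 cur.2) (f cur.2 past cur).

Definition pprofile (N : nat) (T : finType) := 'I_N -> state N T -> T.

Definition embed (N : nat) (T : finType) (phi : pprofile N T) : profile N T :=
  fun n _ cur => phi n cur.

Definition legal_pos (N : nat) (T : finType) (e : rel T) (phi : pprofile N T) : Prop :=
  forall cur, ~~ capture cur -> legal e (cur.1 cur.2) (phi cur.2 cur).

Definition mix (N : nat) (T : finType) (m : 'I_N) (a b : profile N T) : profile N T :=
  fun n => if n == m then a n else b n.

Definition optimal_pair (N : nat) (T : finType) (e : rel T) (gamma eps : R)
    (m : 'I_N) (phi : pprofile N T) : Prop :=
  legal_pos e phi /\
  forall s0 : state N T, ~~ capture s0 ->
  forall g : profile N T, legal_profile e g ->
    (payoff gamma eps m (mix m g (embed phi)) s0 <= payoff gamma eps m (embed phi) s0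
     <= payoff gamma eps m (mix m (embed phi) g) s0)%R.

Definition CR_optimal (N : nat) (T : finType) (e : rel T) (gamma eps : R)
    (n : 'I_N) (sigma : state N T -> T) : Prop :=
  (forall s : state N T, s.2 = n -> ~~ capture s -> legal e (s.1 n) (sigma s)) /\
  exists (r : 'I_N) (phi : pprofile N T),
    is_robber r /\ optimal_pair e gamma eps r phi /\
    forall s : state N T, s.2 = n -> ~~ capture s -> phi n s = sigma s.

Inductive reach (N : nat) (T : finType) (e : rel T) (s0 : state N T) : state N T -> Prop :=
  | reach0 : reach e s0 s0
  | reachS s v : reach e s0 s -> ~~ capture s -> legal e (s.1 s.2) v ->
                 reach e s0 (step s v).

(* a choice of optimal strategies: phi m n = phi^n_m, and (phi m) is an
   optimal pure positional pair of Gamma^m_N; this determines a trigger profile *)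
Definition trigger_choice (N : nat) (T : finType) (e : rel T) (gamma eps : R)
    (phi : 'I_N -> pprofile N T) : Prop :=
  forall m, optimal_pair e gamma eps m (phi m).

Definition positional_trigger (N : nat) (T : finType) (e : rel T) (gamma eps : R)
    (s0 : state N T) (phi : 'I_N -> pprofile N T) : Prop :=
  forall n m : 'I_N, exists sigma : state N T -> T,
    CR_optimal e gamma eps n sigma /\
    forall s, reach e s0 s -> s.2 = n -> ~~ capture s -> phi m n s = sigma s.

(* On two vertices every move is legal and a cop that does not capture can only
   stay on the vertex the robber is not on.  In the robber's game a cop to move
   must therefore capture at once: otherwise the coalition could gain by
   capturing one turn earlier.  In the game of a third cop C_m, however, the
   coalition gains by postponing that capture by one turn and letting the next
   cop capture alone instead, since C_m then receives the same share
   eps/(N-2), discounted once more.  A positional trigger profile would make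
   C_m's punishment strategy for the first cop agree with a CR-optimal one on
   the current positions, which are reachable from s0 by staying moves. *)
From mathcomp Require Import all_boot.
From Stdlib Require Import Reals.
From mathcomp Require Import zify.
From Stdlib Require Import Lra ClassicalEpsilon.

Set Implicit Arguments.
Unset Strict Implicit.
Unset Printing Implicit Defensive.

Lemma card2_eq (T : finType) : #|T| = 2 -> forall x y z : T, x != z -> y != z -> x = y.
Proof.
move=> HV x y z xz yz; apply/eqP/negPn/negP => xy.
have U : uniq [:: x; y; z] by rewrite /= !inE negb_or xy xz yz.
by have := max_card (mem [:: x; y; z]); rewrite (card_uniqP U) HV.
Qed.

Lemma legal_card2 (T : finType) (e : rel T) : irreflexive e ->
  (forall x y : T, connect e x y) -> #|T| = 2 -> forall x y, legal e x y.
Proof.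
move=> Hirr Hconn HV x y; rewrite /legal; case: eqVneq => //= yx.
have /connectP [[|z q] /= P E] := Hconn x y; first by rewrite E eqxx in yx.
move: P => /andP [exz _].
have zx : z != x by apply: contraTneq exz => ->; rewrite Hirr.
by rewrite -(card2_eq HV zx yx).
Qed.

Section Board.

Variables (N : nat) (T : finType).
Implicit Types (s : state N T) (p : {ffun 'I_N -> T}).

Lemma cop_neq_robber (i r : 'I_N) : is_cop i -> is_robber r -> i != r.
Proof.
by move=> Ci Rr; apply: contraTneq Ci => ->; rewrite /is_cop -/(is_robber r) Rr.
Qed.

Lemma ordS_neq (k : 'I_N) : 1 < N -> ordS k != k.
Proof.
move=> HN; apply/eqP => /(congr1 val) /=; have := ltn_ord k.
case: (ltngtP k.+1 N) => [lt _|//|eqN _]; first by rewrite modn_small //; lia.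
by rewrite eqN modnn; lia.
Qed.

Lemma iter_ordS (k : 'I_N) n : val (iter n (@ordS N) k) = (k + n) %% N.
Proof.
elim: n => [|n IH] /=; first by rewrite addn0 modn_small.
by rewrite IH addnS -addn1 modnDml addn1.
Qed.

Variables (r : 'I_N) (Hr : is_robber r).

Lemma on_robberE s i : on_robber s i = (s.1 i == s.1 r).
Proof.
apply/existsP/eqP => [[j /andP [Rj /eqP ->]]|E]; last by exists r; rewrite Hr E eqxx.
by congr (s.1 _); apply/val_inj; move: Rj Hr => /eqP -> /eqP ->.
Qed.

Lemma capture_cop s k : is_cop k -> s.1 k = s.1 r -> capture s.
Proof. by move=> Ck E; apply/existsP; exists k; rewrite Ck on_robberE E eqxx. Qed.

Lemma noncapture_cop s i : ~~ capture s -> is_cop i -> s.1 i != s.1 r.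
Proof. by move=> Hs Ci; apply: contra Hs => /eqP; apply: capture_cop. Qed.

Lemma ncops_on_lone s k : is_cop k -> s.1 k = s.1 r ->
  (forall i, is_cop i -> i != k -> s.1 i != s.1 r) -> ncops_on s = 1.
Proof.
move=> Ck E H; rewrite /ncops_on -(card1 k); apply: eq_card => i /=.
rewrite !inE on_robberE; case: (eqVneq i k) => [->|ik]; first by rewrite Ck E eqxx.
by case Ci: (is_cop i) => //=; apply: negbTE (H _ Ci ik).
Qed.

Lemma capture_turn p j k : capture (p, j) = capture (p, k).
Proof. by []. Qed.

Lemma step_stay p j : step (p, j) (p j) = (p, ordS j).
Proof. by congr pair; apply/ffunP => i; rewrite ffunE; case: eqP => // ->. Qed.

Section CaptureStep.

Variables (p : {ffun 'I_N -> T}) (k : 'I_N) (j : 'I_N).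
Hypotheses (Hp : ~~ capture (p, k)) (Cj : is_cop j).

Lemma step_to_robber_on : (step (p, j) (p r)).1 j = (step (p, j) (p r)).1 r.
Proof. by rewrite /= !ffunE eqxx if_same. Qed.

Lemma capture_step_to_robber : capture (step (p, j) (p r)).
Proof. exact: capture_cop Cj step_to_robber_on. Qed.

Lemma reward_lone_capture eps (m : 'I_N) : 2 < N -> is_cop m -> m != j ->
  reward eps m (step (p, j) (p r)) = (eps / INR (N - 1 - 1))%R.
Proof.
move=> HN Cm mj.
have others i : is_cop i -> i != j -> (step (p, j) (p r)).1 i != (step (p, j) (p r)).1 r.
  move=> Ci ij; rewrite /= !ffunE (negbTE ij) if_same.
  exact: (noncapture_cop Hp Ci).
rewrite /reward; have -> : is_robber m = false := negbTE Cm.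
rewrite (ncops_on_lone Cj step_to_robber_on others).
have -> : (1 == N.-1) = false by apply/eqP; lia.
by rewrite on_robberE (negbTE (others _ Cm mj)).
Qed.

End CaptureStep.

Lemma reach_rotate (e : rel T) p k j : ~~ capture (p, k) -> reach e (p, k) (p, j).
Proof.
move=> Hp; have Rn n : reach e (p, k) (p, iter n (@ordS N) k).
  elim: n => [|n IH] /=; first exact: reach0.
  by rewrite -step_stay; apply: reachS => //; rewrite /legal eqxx.
have -> : j = iter ((N - k) + j) (@ordS N) k.
  apply/val_inj; rewrite iter_ordS addnA subnKC; last exact: ltnW (ltn_ord k).
  by rewrite modnDl modn_small.
exact: Rn.
Qed.

End Board.

Section Payoffs.

Local Open Scope R_scope.

Variables (N : nat) (T : finType) (gamma eps : R).

Lemma payoff_first_capture (m : 'I_N) (f : profile N T) s t :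
  capture (play f s t) -> (forall t' : nat, (t' < t)%nat -> ~~ capture (play f s t')) ->
  payoff gamma eps m f s = reward eps m (play f s t) * gamma ^ t.
Proof.
move=> Ct Hmin; rewrite /payoff; case: excluded_middle_informative => [H|[]];
  last by exists t.
case: ex_minnP => t' Ct' Hm; suff -> : t' = t by [].
apply/eqP; rewrite eqn_leq Hm //= leqNgt; apply: contraT; rewrite negbK => lt.
by move: (Hmin _ lt); rewrite Ct'.
Qed.

Lemma robber_payoff_gt (m : 'I_N) (f : profile N T) s :
  is_robber m -> 0 < gamma < 1 ->
  ~~ capture (play f s 0) -> ~~ capture (play f s 1) -> - gamma < payoff gamma eps m f s.
Proof.
move=> Rm Hg C0 C1; rewrite /payoff; case: excluded_middle_informative => [H|_]; last lra.
case: ex_minnP => t Ct _; rewrite /reward Rm.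
case: t Ct => [|[|t]] Ct; [by rewrite Ct in C0 | by rewrite Ct in C1|].
have [_ lt1] : 0 <= gamma ^ t.+1 < 1 by apply: pow_lt_1_compat; [lra | lia].
have -> : gamma ^ t.+2 = gamma * gamma ^ t.+1 by []; nra.
Qed.

End Payoffs.

Section TwoVertices.

Local Open Scope R_scope.

Variables (N : nat) (T : finType) (e : rel T) (gamma eps : R).
Hypotheses (Hleg : forall x y : T, legal e x y) (HV : #|T| = 2%nat) (Hg : 0 < gamma < 1).
Variables (r : 'I_N) (p : {ffun 'I_N -> T}) (c : 'I_N).
Hypotheses (Hr : is_robber r) (Cc : is_cop c) (Hp : ~~ capture (p, c)).

Lemma robber_optimal_cop_captures (phi : pprofile N T) :
  optimal_pair e gamma eps r phi -> phi c (p, c) = p r.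
Proof.
move=> [_ Opt]; case: (eqVneq (phi c (p, c)) (p r)) => // ne.
have stay : phi c (p, c) = p c := card2_eq HV ne (noncapture_cop Hr Hp Cc).
pose capture_now : profile N T := fun _ _ cur => cur.1 r.
have [_ Hdev] := Opt (p, c) Hp capture_now (fun _ _ _ => Hleg _ _).
have dev_payoff : payoff gamma eps r (mix r (embed phi) capture_now) (p, c) = - gamma.
  have P1 : play (mix r (embed phi) capture_now) (p, c) 1 = step (p, c) (p r).
    by rewrite /play /= /mix (negbTE (cop_neq_robber Cc Hr)).
  have C1 : capture (play (mix r (embed phi) capture_now) (p, c) 1).
    by rewrite P1; apply: capture_step_to_robber.
  rewrite (payoff_first_capture gamma eps r C1); last by case.
  by rewrite P1 /reward Hr pow_1; ring.
have : - gamma < payoff gamma eps r (embed phi) (p, c).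
  apply: robber_payoff_gt => //.
  by rewrite /play /= /embed stay step_stay (capture_turn _ _ c).
lra.
Qed.

Lemma cop_optimal_no_first_capture (m : 'I_N) (phi : pprofile N T) :
  (2 < N)%nat -> 0 < eps -> is_cop m -> is_cop (ordS c) -> m != c -> m != ordS c ->
  optimal_pair e gamma eps m phi -> phi c (p, c) != p r.
Proof.
move=> HN Heps Cm Cc' mc mc' [_ Opt]; apply/eqP => first_capture.
pose c' := ordS c.
pose postpone : profile N T := fun n _ cur => if n == c then cur.1 n else cur.1 r.
have [_ Hdev] := Opt (p, c) Hp postpone (fun _ _ _ => Hleg _ _).
have Hp' : ~~ capture (p, c') by rewrite (capture_turn _ _ c).
have share_pos : 0 < eps / INR (N - 1 - 1).
  by apply: Rdiv_lt_0_compat => //; apply: lt_0_INR; apply/ltP; lia.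
have opt_payoff : payoff gamma eps m (embed phi) (p, c) = eps / INR (N - 1 - 1) * gamma.
  have P1 : play (embed phi) (p, c) 1 = step (p, c) (p r).
    by rewrite /play /= /embed first_capture.
  have C1 : capture (play (embed phi) (p, c) 1).
    by rewrite P1; apply: capture_step_to_robber.
  rewrite (payoff_first_capture gamma eps m C1); last by case.
  by rewrite P1 (reward_lone_capture Hr Hp Cc) // pow_1.
have dev_payoff : payoff gamma eps m (mix m (embed phi) postpone) (p, c) =
                  eps / INR (N - 1 - 1) * gamma ^ 2.
  have stay : mix m (embed phi) postpone c [::] (p, c) = p c.
    by rewrite /mix eq_sym (negbTE mc) /postpone eqxx.
  have P1 : play (mix m (embed phi) postpone) (p, c) 1 = (p, c').
    by rewrite /play /= stay step_stay.
  have P2 : play (mix m (embed phi) postpone) (p, c) 2 = step (p, c') (p r).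
    rewrite /play /= stay step_stay /mix eq_sym (negbTE mc') /postpone.
    have c'c : c' != c by apply: ordS_neq; lia.
    by rewrite (negbTE c'c).
  have C2 : capture (play (mix m (embed phi) postpone) (p, c) 2).
    by rewrite P2; apply: capture_step_to_robber.
  rewrite (payoff_first_capture gamma eps m C2); last by case=> [|[|]] // _; rewrite ?P1.
  by rewrite P2 (reward_lone_capture Hr Hp' Cc').
rewrite opt_payoff dev_payoff in Hdev.
have gain : 0 < eps / INR (N - 1 - 1) * gamma * (1 - gamma).
  by apply: Rmult_lt_0_compat; nra.
simpl in Hdev; nra.
Qed.

End TwoVertices.

Unset Implicit Arguments.

Theorem mainTheorem2 (T : finType) (e : rel T)
    (Hsym : symmetric e) (Hirr : irreflexive e)
    (Hconn : forall x y : T, connect e x y) (HV : #|T| = 2)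
    (N : nat) (HN : 3 < N)
    (eps : R) (Heps : (0 < eps <= / INR (N - 1))%R)
    (s0 : state N T) (Hs0 : ~~ capture s0)
    (gamma : R) (Hg : (0 < gamma < 1)%R)
    (phi : 'I_N -> pprofile N T) (Htr : trigger_choice e gamma eps phi) :
  ~ positional_trigger e gamma eps s0 phi.
Proof.
move: Hs0; case: s0 => p k Hp Hpos.
have Hleg := legal_card2 Hirr Hconn HV.
have N0 : 0 < N by lia.
have Nm : N - 2 < N by lia.
pose c : 'I_N := Ordinal N0.
pose m : 'I_N := Ordinal Nm.
have val_c' : val (ordS c) = 1 by rewrite /= modn_small //; lia.
have [Cc Cc' Cm] : [/\ is_cop c, is_cop (ordS c) & is_cop m].
  by rewrite /is_cop val_c' /=; split; apply/eqP; lia.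
have [mc mc'] : m != c /\ m != ordS c.
  by split; apply/eqP => /(congr1 val); rewrite ?val_c' /=; lia.
have Hc : ~~ capture (p, c) by rewrite (capture_turn _ _ k).
have [sigma [[_ [r [phi' [Hr [Hopt Hphi']]]]] Hagree]] := Hpos c m.
have := cop_optimal_no_first_capture Hleg HV Hg Hr Cc Hc ltac:(lia) (proj1 Heps)
  Cm Cc' mc mc' (Htr m).
rewrite (Hagree (p, c) (reach_rotate e c Hp) erefl Hc) -(Hphi' (p, c) erefl Hc).
by rewrite (robber_optimal_cop_captures Hleg HV Hg Hr Cc Hc Hopt) eqxx.
Qed.
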